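(* Let $\alpha<0$ and $U(x)=-x^\alpha$ on $(0,\infty)$. Let $\pi_t$ be a trading strategy such that $|\mathbb{E}U(V_t^\pi)|\le Ke^{-ct}$ for all sufficiently large $t$, for some constants $c,K>0$. Then $\pi_t$ generates an asymptotic exponential arbitrage with geometrically decaying probability of failure, i.e. there are $b>0$, $c'>0$ with $\mathbb{P}(V_t^\pi\ge e^{bt})\ge1-e^{-c't}$ for all sufficiently large $t$.
   Context: Setting: $X_t$ is a real-valued process on a filtered probability space with filtration $\mathcal{F}_t=\sigma(X_s,s\le t)$, $S_t=e^{X_t}$. A trading strategy is a predictable $[0,1]$-valued process $(\pi_t)_{t\ge1}$; its wealth is $V_0^\pi=V_0>0$, $V_t^\pi=V_{t-1}^\pi((1-\pi_t)+\pi_tS_t/S_{t-1})$ (so $V_t^\pi>0$). *)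

From HB Require Import structures.
From mathcomp Require Import all_boot all_order all_algebra.
From mathcomp Require Import all_classical all_reals all_analysis.
Set Implicit Arguments. Unset Strict Implicit. Unset Printing Implicit Defensive.
Import Order.TTheory GRing.Theory Num.Theory.
Local Open Scope classical_set_scope.
Local Open Scope ring_scope.

Definition natural_filtration {d : measure_display} {Omega : measurableType d}
  {R : realType} (X : nat -> Omega -> R) (t : nat) : set (set Omega) :=
  <<s \bigcup_(s in [set s : nat | (s <= t)%N])
        [set X s @^-1` B | B in [set B : set R | measurable B]] >>.

Definition trading_strategy {d : measure_display} {Omega : measurableType d}
  {R : realType} (X : nat -> Omega -> R) (pi : nat -> Omega -> R) : Prop :=
  (forall t : nat, (0 < t)%N -> forall B : set R, measurable B ->
      natural_filtration X t.-1 (pi t @^-1` B)) /\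
  (forall t : nat, (0 < t)%N -> forall w : Omega, 0 <= pi t w <= 1).

(* Wealth: V_0 = V0, V_t = V_{t-1} ((1 - pi_t) + pi_t S_t / S_{t-1}), S_t = e^{X_t}. *)
Fixpoint wealth {Omega : Type} {R : realType} (X pi : nat -> Omega -> R)
  (V0 : R) (t : nat) (w : Omega) : R :=
  match t with
  | O => V0
  | t'.+1 => wealth X pi V0 t' w *
      ((1 - pi t'.+1 w) + pi t'.+1 w * (expR (X t'.+1 w) / expR (X t' w)))
  end.

Definition power_utility {R : realType} (alpha : R) (x : R) : R := - (x `^ alpha).

From HB Require Import structures.
From mathcomp Require Import all_boot all_order all_algebra.
From mathcomp Require Import all_classical all_reals all_analysis.
From mathcomp Require Import measurable_realfun ring lra.
Import Order.TTheory GRing.Theory Num.Theory.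
Local Open Scope classical_set_scope.
Local Open Scope ring_scope.

(* Since alpha < 0, wealth below y forces V^alpha above y^alpha, so a Markov
   bound for V^alpha controls P(V < y).  Choosing y = e^{bt} with
   b = c / (-2 alpha) gives y^alpha = e^{-ct/2}, hence
   P(V_t < e^{bt}) <= K e^{-ct/2} <= e^{-ct/4} once t > 4K/c. *)

Section strategy_measurable.
Context {d : measure_display} {Omega : measurableType d} {R : realType}.
Variable X : nat -> Omega -> R.
Hypothesis mX : forall t, measurable_fun setT (X t).

Lemma natural_filtration_sub t : natural_filtration X t `<=` measurable.
Proof.
apply: smallest_sub; first exact: sigma_algebra_measurable.
by move=> _ [s _ [B mB <-]]; rewrite -[X s @^-1` B]setTI; exact: mX.
Qed.

Variable pi : nat -> Omega -> R.
Hypothesis hpi : trading_strategy X pi.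

Lemma measurable_strategy t : (0 < t)%N -> measurable_fun setT (pi t).
Proof.
move=> t_gt0 _ B mB; rewrite setTI.
exact: (natural_filtration_sub t.-1) (hpi.1 t t_gt0 B mB).
Qed.

Lemma measurable_wealth V0 t : measurable_fun setT (wealth X pi V0 t).
Proof.
elim: t => [|t IH] /=; first exact: measurable_cst.
have mp := measurable_strategy t.+1 (ltn0Sn t).
under eq_fun do rewrite -expRB.
apply: measurable_funM => //; apply: measurable_funD.
  by apply: measurable_funB => //; exact: measurable_cst.
apply: measurable_funM => //.
by apply: measurableT_comp => //; exact: measurable_funB.
Qed.

End strategy_measurable.

Lemma wealth_gt0 {Omega : Type} {R : realType} (X pi : nat -> Omega -> R) V0 :
  (forall t, (0 < t)%N -> forall w, 0 <= pi t w <= 1) ->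
  0 < V0 -> forall t w, 0 < wealth X pi V0 t w.
Proof.
move=> pi01 V0_gt0 t w; elim: t => [|t IH] //=.
have /andP[p_ge0 p_le1] := pi01 t.+1 (ltn0Sn t) w.
have : 0 < expR (X t.+1 w) / expR (X t w) by rewrite divr_gt0 ?expR_gt0.
move: (pi t.+1 w) (_ / _) p_ge0 p_le1 => p r p_ge0 p_le1 r_gt0.
by rewrite mulr_gt0 //; nra.
Qed.

Lemma lt0_ger_powR {R : realType} (r x y : R) :
  r < 0 -> 0 < x -> x <= y -> y `^ r <= x `^ r.
Proof.
move=> r_lt0 x_gt0 le_xy; have y_gt0 := lt_le_trans x_gt0 le_xy.
by rewrite /powR !gt_eqF // ler_expR ler_nM2l // ler_ln.
Qed.

Lemma markov_lower_tail_powR {d : measure_display} {T : measurableType d}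
    {R : realType} (mu : {measure set T -> \bar R}) (f : T -> R) (r y : R) :
  r < 0 -> measurable_fun setT f -> (forall w, 0 < f w) ->
  ((y `^ r)%:E * mu [set w | (f w < y)%R] <= \int[mu]_w (f w `^ r)%:E)%E.
Proof.
move=> r_lt0 mf f_gt0.
have mA : measurable [set w | f w < y].
  by rewrite -preimage_itvNyo -[_ @^-1` _]setTI; exact: mf.
rewrite -[X in mu X]setIT -integral_indic // -ge0_integralZl //; last first.
- by rewrite lee_fin powR_ge0.
- by apply/measurable_EFinP; exact: measurable_indic.
apply: ge0_le_integral => //.
- by move=> w _; rewrite -EFinM lee_fin mulr_ge0 ?powR_ge0.
- by apply: emeasurable_funM => //; exact/measurable_EFinP/measurable_indic.
- exact/measurable_EFinP/(measurableT_comp (measurable_powR _) mf).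
move=> w _; rewrite -EFinM lee_fin indicE.
have [wA|_] := boolP (w \in _); last by rewrite mulr0 powR_ge0.
rewrite inE /= in wA.
by rewrite mulr1; exact/lt0_ger_powR/ltW.
Qed.

Lemma abse_integral_power_utility {d : measure_display} {T : measurableType d}
    {R : realType} (mu : {measure set T -> \bar R}) (f : T -> R) (r : R) :
  (`| \int[mu]_w (power_utility r (f w))%:E | = \int[mu]_w (f w `^ r)%:E)%E.
Proof.
have powR_ge0E w : (0 <= (f w `^ r)%:E)%E by rewrite lee_fin powR_ge0.
have -> : (\int[mu]_w (power_utility r (f w))%:E = \int[mu]_w - (f w `^ r)%:E)%E.
  by apply: eq_integral => w _; rewrite /power_utility EFinN.
by rewrite integral_ge0N // abseN gee0_abs //; exact: integral_ge0.
Qed.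

Lemma le_expRN_div4 {R : realType} {K c t p : R} : 0 < c -> 4 * K < c * t ->
  expR (- (c * t / 2)) * p <= K * expR (- (c * t)) -> p <= expR (- (c / 4 * t)).
Proof.
move=> c_gt0 ct_gt; set E := expR (- (c / 4 * t)).
have E_gt0 : 0 < E by exact: expR_gt0.
have -> : expR (- (c * t / 2)) = E ^+ 2.
  by rewrite /E -expRM_natl; congr expR; field.
have -> : expR (- (c * t)) = E ^+ 4.
  by rewrite /E -expRM_natl; congr expR; field.
have KE_le1 : K * E <= 1.
  have <- : expR (c / 4 * t) * E = 1 by rewrite /E -expRD subrr expR0.
  have := expR_ge1Dx (c / 4 * t).
  by move=> ?; rewrite ler_wpM2r ?(ltW E_gt0) //; lra.
have -> : K * E ^+ 4 = E ^+ 2 * (K * E * E) by ring.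
rewrite ler_pM2l ?exprn_gt0 // => /le_trans; apply.
by rewrite ger_pMl // KE_le1.
Qed.

Theorem theoremt3p5 (R : realType) (d : measure_display) (Omega : measurableType d)
  (P : probability Omega R) (X : nat -> Omega -> R)
  (hX : forall t : nat, measurable_fun setT (X t))
  (pi : nat -> Omega -> R) (hpi : trading_strategy X pi)
  (V0 : R) (hV0 : 0 < V0) (alpha : R) (halpha : alpha < 0)
  (c K : R) (hc : 0 < c) (hK : 0 < K)
  (hU : exists T : nat, forall t : nat, (T <= t)%N ->
     (`| \int[P]_(w in setT) (power_utility alpha (wealth X pi V0 t w))%:E |
        <= (K * expR (- (c * t%:R)))%:E)%E) :
  exists b c' : R, 0 < b /\ 0 < c' /\
    exists T : nat, forall t : nat, (T <= t)%N ->
      ((1 - expR (- (c' * t%:R)))%:E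
         <= P [set w | (expR (b * t%:R) <= wealth X pi V0 t w)%R])%E.
Proof.
case: hU => T0 hT0; set b := c / - (2 * alpha).
exists b, (c / 4); split; first by rewrite divr_gt0 //; lra.
split; first by rewrite divr_gt0.
exists (maxn T0 (Num.truncn (4 * K / c)).+1) => t; rewrite geq_max => /andP[tT0 tT1].
have ct_gt : 4 * K < c * t%:R.
  rewrite [c * _]mulrC -ltr_pdivrMr //; apply: lt_le_trans (truncnS_gt _) _.
  by rewrite ler_nat.
set V := wealth X pi V0 t; set e := expR (b * t%:R).
set A := [set w | (V w < e)%R].
have mV : measurable_fun setT V by exact: measurable_wealth.
have mA : measurable A by rewrite /A -preimage_itvNyo -[_ @^-1` _]setTI; exact: mV.
have -> : [set w | (e <= V w)%R] = ~` A.
  by apply/seteqP; split => w /=; rewrite leNgt => /negP.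
have bound := hT0 t tT0; rewrite abse_integral_power_utility in bound.
have := markov_lower_tail_powR P V alpha e halpha mV (wealth_gt0 X pi V0 hpi.2 hV0 t).
rewrite -expRM (_ : b * t%:R * alpha = - (c * t%:R / 2)); last first.
  by rewrite /b; field; lra.
move=> /le_trans /(_ bound) tail_bound.
have finA : P A \is a fin_num by exact: fin_num_measure.
have tail_le : fine (P A) <= expR (- (c / 4 * t%:R)).
  by apply: (le_expRN_div4 hc ct_gt); rewrite -lee_fin EFinM fineK.
by rewrite probability_setC // -(fineK finA) -EFinB lee_fin lerB.
Qed.
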